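(* Let $k\ge3$, let $m_1,\dots,m_{k-1}\ge0$ be integers, and fix $w\in\mathcal P(\mathcal M_{k-2})$ (letters $e_1,\dots,e_{k-2}$ with counts $m_1,\dots,m_{k-2}$) and $\Pi\in\mathcal P([m_{k-2}\times m_{k-1}])$. Consider the words $W\in\mathcal P(\mathcal M_{k-1})$ such that: (i) deleting all letters $e_{k-1}$ from $W$ gives $w$, and (ii) deleting all letters $e_1,\dots,e_{k-3}$ from $W$ and renaming $e_{k-2}\mapsto a$, $e_{k-1}\mapsto b$ gives $\Pi$. The number of such $W$ is $$\prod_{r=0}^{m_{k-2}}\binom{\pi^\star(\Pi)(r)+\sum_{l=1}^{k-3}\pi^\star_{k-2,l}(w)(r)}{\pi^\star(\Pi)(r)}.$$ All such $W$ yield the same value $S(w)\cdot\pi^\star(\Pi)=\sum_{r=0}^{m_{k-2}}S_r(w)\pi^\star(\Pi)(r)$ of the count of position tuples $p_1<\dots<p_{k-1}$ with letter $e_j$ at $p_j$. Summing these counts over all $(w,\Pi)$ gives $\binom{m_1+\cdots+m_{k-1}}{m_1,\ldots,m_{k-1}}$.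
   Context: $\mathcal P(\mathcal M_d)$ is the set of words of length $m_1+\dots+m_d$ in letters $e_1,\dots,e_d$ containing exactly $m_i$ copies of $e_i$. For a word $w$ and $i\ne j$, $\pi_{i,j}(w)(s)$ ($s=1,\dots,m_j$) is the number of occurrences of $e_i$ preceding the $s$-th occurrence of $e_j$, and $\pi^\star_{i,j}(w)(r)=\#\{s:\pi_{i,j}(w)(s)=r\}$. $S_t(w)$, for $w\in\mathcal P(\mathcal M_d)$ and $0\le t\le m_d$, is the number of position tuples $p_1<\dots<p_d$ in $w$ with letter $e_i$ at $p_i$ for each $i$, and $p_d$ at or before the $t$-th occurrence of $e_d$. $\mathcal P([m_{k-2}\times m_{k-1}])$ is the set of words with $m_{k-2}$ letters $a$ and $m_{k-1}$ letters $b$. For such $\Pi$, $\pi(\Pi)(s)$ is the number of $a$'s before the $s$-th $b$, and $\pi^\star(\Pi)(r)=\#\{s:\pi(\Pi)(s)=r\}$ for $r=0,\dots,m_{k-2}$. An empty sum over $l$ is $0$. *)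

(* Words are seq nat; the letter e_i is the natural number i (1-based).
   Words over {a,b} are seq bool with a = false, b = true. *)
From mathcomp Require Import all_boot.
Set Implicit Arguments. Unset Strict Implicit. Unset Printing Implicit Defensive.

Fixpoint allseqs (T : Type) (A : seq T) (n : nat) : seq (seq T) :=
  if n is n'.+1 then [seq x :: s | x <- A, s <- allseqs A n'] else [:: [::]].

Definition totlen (d : nat) (m : nat -> nat) : nat := \sum_(1 <= i < d.+1) m i.

Definition inPM (d : nat) (m : nat -> nat) (w : seq nat) : bool :=
  (size w == totlen d m) && all (fun i => count_mem i w == m i) (iota 1 d).

Definition PM (d : nat) (m : nat -> nat) : seq (seq nat) :=
  [seq w <- allseqs (iota 1 d) (totlen d m) | inPM d m w].

Definition inPab (p q : nat) (Pi : seq bool) : bool :=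
  (count_mem false Pi == p) && (count_mem true Pi == q).

Definition Pab (p q : nat) : seq (seq bool) :=
  [seq Pi <- allseqs [:: false; true] (p + q) | inPab p q Pi].

Definition positions (T : eqType) (x : T) (w : seq T) : seq nat :=
  [seq p <- iota 0 (size w) | nth x w p == x].

(* pi_{i,j}(w)(s), s >= 1: number of occurrences of i preceding the s-th occurrence of j *)
Definition piw (T : eqType) (i j : T) (w : seq T) (s : nat) : nat :=
  count_mem i (take (nth 0 (positions j w) s.-1) w).

Definition pistar (T : eqType) (i j : T) (w : seq T) (r : nat) : nat :=
  count (fun s => piw i j w s == r) (iota 1 (count_mem j w)).

Definition piab (Pi : seq bool) (s : nat) : nat := piw false true Pi s.
Definition piabstar (Pi : seq bool) (r : nat) : nat := pistar false true Pi r.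

Definition postuples (d : nat) (w : seq nat) : seq (seq nat) :=
  [seq p <- allseqs (iota 0 (size w)) d |
     sorted ltn p && (map (fun q => nth 0 w q) p == iota 1 d)].

(* S_t(w) for w in P(M_d): those tuples whose p_d is at or before the t-th occurrence of e_d,
   i.e. at most t occurrences of e_d occur at positions <= p_d *)
Definition St (d : nat) (w : seq nat) (t : nat) : nat :=
  count (fun p => count_mem d (take (last 0 p).+1 w) <= t) (postuples d w).

Definition multinomial (d : nat) (m : nat -> nat) : nat :=
  (totlen d m)`! %/ \prod_(1 <= i < d.+1) (m i)`!.

Definition compatible (k : nat) (w : seq nat) (Pi : seq bool) (W : seq nat) : bool :=
  (filter (fun x => x != k.-1) W == w) &&
  (map (fun x => x == k.-1) (filter (fun x => (x == k - 2) || (x == k.-1)) W) == Pi).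

Definition prodformula (k : nat) (m : nat -> nat) (w : seq nat) (Pi : seq bool) : nat :=
  \prod_(0 <= r < (m (k - 2)).+1)
     'C(piabstar Pi r + \sum_(1 <= l < k - 2) pistar (k - 2) l w r, piabstar Pi r).

From mathcomp Require Import all_boot zify.
Set Implicit Arguments. Unset Strict Implicit. Unset Printing Implicit Defensive.

(* Write k = d + 2, c = e_d and b = e_(d+1).  A word W over e_1, ..., e_(d+1) has two
   projections: [erase_letter b W] (condition (i)) and the a/b-word [ab_word b c W]
   of its letters c, b (condition (ii)); [splits_into b c w Pi W] says they are w, Pi.
   - Gap profiles: [gaps a B s r] counts the letters of s satisfying B that are
     preceded by exactly r letters a.  The statistics pi* are gap profiles
     ([pistar_gaps]), and summing pi*_(c,l)(w) over l < c gives the profile of the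
     non-c letters of w ([sum_gaps_pred1]).
   - Part (i): peeling off the first letter of W gives a recursion for the number of
     W over (w, Pi) ([count_splits_step]); the product of binomials [gap_product]
     obeys the same recursion by Pascal's rule, so the two agree ([count_splits]).
   - Part (ii): appending a letter to W changes the number of position tuples and
     S(w) . pi*(Pi) in the same way ([size_postuples_gaps]); position tuples are
     counted as embeddings of the pattern 1..d into the word.
   - Part (iii): every W splits into exactly one pair (w, Pi) ([sum_count_splits]),
     and #P(M_(d+1)) is the multinomial coefficient ([size_PM]) because each w has
     C(|w| + m_(d+1), m_(d+1)) extensions, the case c = 0 of part (i). *)

Lemma count_sumE (T : Type) (a : pred T) (s : seq T) : count a s = \sum_(x <- s) a x.
Proof. by rewrite -sum1_count big_mkcond. Qed.

Lemma sum_pred1 (T : eqType) (s : seq T) (a : T) (t : nat) : uniq s -> a \in s ->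
  \sum_(x <- s) (x == a) * t = t.
Proof.
move=> us sa; rewrite -big_distrl /= -count_sumE.
by rewrite (eq_count (a2 := pred1 a)) // count_uniq_mem // sa mul1n.
Qed.

Lemma sum_nat_pick N M (G : nat -> nat) : M < N -> \sum_(0 <= r < N) G r * (r == M) = G M.
Proof.
move=> MN; rewrite (bigD1_seq M) ?mem_index_iota ?iota_uniq //= eqxx muln1.
by rewrite big1 ?addn0 // => r /negbTE ->; rewrite muln0.
Qed.

Lemma sum_count_mem (T : eqType) (L s : seq T) : uniq L ->
  \sum_(i <- L) count_mem i s = count (mem L) s.
Proof.
elim: L => [|x L IH] /= uL; first by rewrite big_nil count_pred0.
case/andP: uL => xL uL; rewrite big_cons IH // -(count_predUI (pred1 x) (mem L)).
rewrite (@eq_count _ (predI _ _) pred0) ?count_pred0 ?addn0; last first.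
  by move=> y /=; apply/negbTE/andP => -[/eqP -> yL]; rewrite yL in xL.
by apply: eq_count => y; rewrite /= inE.
Qed.

Lemma iota_rcons m n : iota m n.+1 = rcons (iota m n) (m + n).
Proof. by rewrite -addn1 iotaD cats1. Qed.

Lemma mem_allseqs (T : eqType) (A : seq T) n s :
  (s \in allseqs A n) = (size s == n) && all (mem A) s.
Proof.
elim: n s => [|n IH] [|x s] //=.
- by apply/negbTE/allpairsP => -[[y t] [_ _ //]].
- apply/allpairsP/idP => [[[y t] /= [Hy Ht [-> ->]]]|/andP[Hs /andP[Hx Ha]]].
    by move: Ht; rewrite IH eqSS Hy => /andP[-> ->].
  by exists (x, s); split => //=; rewrite IH -eqSS Hs.
Qed.

Lemma allseqs_uniq (T : eqType) (A : seq T) n : uniq A -> uniq (allseqs A n).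
Proof.
move=> uA; elim: n => [|n IH] //=.
by apply: allpairs_uniq => // -[x s] [y t] _ _ /= [-> ->].
Qed.

Lemma count_allseqsS (T : Type) (A : seq T) n (P : pred (seq T)) :
  count P (allseqs A n.+1) = \sum_(x <- A) count (fun s => P (x :: s)) (allseqs A n).
Proof. by rewrite count_sumE big_allpairs_dep; apply: eq_bigr => x _; rewrite count_sumE. Qed.

(* [gaps a B s r]: the number of letters x of s with [B x] preceded in s by exactly
   r letters a.  Both pi*(Pi) and pi*_(c,l)(w) are of this form. *)
Fixpoint gaps (T : eqType) (a : T) (B : pred T) (s : seq T) (r : nat) : nat :=
  if s is x :: s' then
    (B x && (r == 0)) +
    (if x == a then (if r is r'.+1 then gaps a B s' r' else 0) else gaps a B s' r)
  else 0.

Lemma gaps_rcons (T : eqType) (a : T) (B : pred T) s x r :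
  gaps a B (rcons s x) r = gaps a B s r + (B x && (r == count_mem a s)).
Proof.
elim: s r => [|y s IH] r /=.
  by case: (x == a); case: r => [|r]; rewrite /= ?addn0.
rewrite eq_sym; case: (y == a) => /=; last by rewrite IH addnA.
by case: r => [|r]; rewrite ?IH /= ?andbF ?addn0 // addnA.
Qed.

Lemma gaps_large (T : eqType) (a : T) (B : pred T) s r :
  count_mem a s < r -> gaps a B s r = 0.
Proof.
elim: s r => [|y s IH] [|r] //= H; rewrite -[r.+1 == 0]/false andbF add0n.
by case: (y == a) H => /= H; apply: IH; lia.
Qed.

Lemma gaps_notin (T : eqType) (a : T) (B : pred T) s : a \notin s -> gaps a B s 0 = count B s.
Proof.
elim: s => //= x s IH; rewrite inE negb_or eq_sym => /andP[/negbTE -> /IH ->].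
by rewrite andbT.
Qed.

Lemma sum_gaps_pred1 (T : eqType) (a : T) (B : pred T) (L : seq T) s r : uniq L ->
  {in s, forall x, B x = (x \in L)} -> \sum_(l <- L) gaps a (pred1 l) s r = gaps a B s r.
Proof.
move=> uL; elim: s r => [|x s IH] r /= Hs; first by rewrite big1.
rewrite big_split /= Hs ?mem_head //.
have IH' r' : \sum_(l <- L) gaps a (pred1 l) s r' = gaps a B s r'.
  by apply: IH => y ys; apply: Hs; rewrite inE ys orbT.
congr (_ + _).
  rewrite (eq_bigr (fun l => (l == x) * (r == 0))); last by move=> l _; rewrite /= eq_sym mulnb.
  by rewrite -big_distrl /= -count_sumE -mulnb count_uniq_mem.
by case: (x == a); case: r => [|r]; rewrite ?IH' // big1.
Qed.

Lemma positions_cons (T : eqType) (x y : T) s :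
  positions x (y :: s) =
  if y == x then 0 :: map succn (positions x s) else map succn (positions x s).
Proof. by rewrite /positions /= -[1]/(1 + 0) iotaDl filter_map; case: (y == x). Qed.

Lemma size_positions (T : eqType) (x : T) s : size (positions x s) = count_mem x s.
Proof.
elim: s => [|y s IH] //; rewrite positions_cons /= eq_sym.
by case: (x == y); rewrite /= size_map IH.
Qed.

Lemma piw_cons (T : eqType) (i j y : T) s t : y != j -> 0 < t <= count_mem j s ->
  piw i j (y :: s) t = (y == i) + piw i j s t.
Proof.
move=> yj /andP[t1 t2].
rewrite /piw positions_cons (negbTE yj) (nth_map 0) ?size_positions; last by lia.
by rewrite /= eq_sym.
Qed.

Lemma pistar_gaps (T : eqType) (i j : T) s r : i != j -> pistar i j s r = gaps i (pred1 j) s r.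
Proof.
move=> ij; elim: s r => [|y s IH] r //; rewrite /pistar /=.
case: (eqVneq y j) => [->|yj] /=.
  rewrite [j == i]eq_sym (negbTE ij) add0n -[2]/(1 + 1) iotaDl count_map -IH /pistar.
  have -> : piw i j (j :: s) 1 = 0 by rewrite /piw positions_cons eqxx.
  congr (_ + _); first by rewrite eq_sym.
  apply: eq_in_count => -[|t]; rewrite mem_iota // => /andP[_ t2] /=.
  rewrite /piw positions_cons eqxx /= (nth_map 0) ?size_positions; last by lia.
  by rewrite /= [j == i]eq_sym (negbTE ij).
rewrite !add0n (eq_in_count (a2 := fun t => (y == i) + piw i j s t == r)); last first.
  by move=> t; rewrite mem_iota => Ht /=; rewrite piw_cons //; lia.
case: (y == i) => /=; last by rewrite -IH.
case: r => [|r] /=; first by rewrite (eq_count (a2 := pred0)) ?count_pred0.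
by rewrite -IH /pistar; apply: eq_count => t; rewrite add1n eqSS.
Qed.

Definition erase_letter (T : eqType) (b : T) (W : seq T) : seq T := [seq x <- W | x != b].

Definition ab_word (T : eqType) (b c : T) (W : seq T) : seq bool :=
  [seq x == b | x <- W & (x == c) || (x == b)].

Definition splits_into (T : eqType) (b c : T) (w : seq T) (Pi : seq bool) (W : seq T) : bool :=
  (erase_letter b W == w) && (ab_word b c W == Pi).

Lemma size_erase_letter (T : eqType) (b : T) W :
  size W = size (erase_letter b W) + count_mem b W.
Proof. by rewrite size_filter -(count_predC (pred1 b) W) addnC; congr (_ + _); apply: eq_count. Qed.

Lemma count_erase_letter (T : eqType) (b i : T) W : i != b ->
  count_mem i (erase_letter b W) = count_mem i W.
Proof.
by move=> ib; rewrite count_filter; apply: eq_count => y /=; case: eqP => // ->; rewrite ib.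
Qed.

Lemma count_ab_word_true (T : eqType) (b c : T) W : count_mem true (ab_word b c W) = count_mem b W.
Proof.
rewrite count_map count_filter; apply: eq_count => y /=.
by case: (eqVneq y b) => [->|yb]; rewrite ?eqxx ?orbT // andbC.
Qed.

Lemma count_ab_word_false (T : eqType) (b c : T) W : c != b ->
  count_mem false (ab_word b c W) = count_mem c W.
Proof.
move=> cb; rewrite count_map count_filter; apply: eq_count => y /=.
by case: (eqVneq y b) => [->|yb] /=; rewrite ?orbF // eq_sym (negbTE cb).
Qed.

(* Part (i), over an arbitrary alphabet T: the words W over (w, Pi) are counted by
   the product over r of C(pi*(Pi)(r) + g(r), pi*(Pi)(r)), where g(r) is the number of
   non-c letters of w after exactly r letters c: in the r-th gap between letters c,
   the b's of Pi are shuffled freely with the non-c letters of w. *)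
Section Interleavings.
Variables (T : eqType) (c : T).

Notation gapsPi Pi r := (gaps false (pred1 true) Pi r).
Notation gapsw w r := (gaps c (predC1 c) w r).

Definition gap_product (w : seq T) (Pi : seq bool) : nat :=
  \prod_(0 <= r < (count_mem c w).+1) 'C(gapsPi Pi r + gapsw w r, gapsPi Pi r).

(* The recursion obtained by inspecting the first letter of an interleaving. *)
Definition interleave_step (f : seq T -> seq bool -> nat) (w : seq T) (Pi : seq bool) : nat :=
  (if Pi is true :: Pi' then f w Pi' else 0) +
  (if w is y :: w' then
     if y == c then (if Pi is false :: Pi' then f w' Pi' else 0) else f w' Pi
   else 0).

Lemma gap_product_nilw Pi : gap_product [::] Pi = 1.
Proof. by rewrite /gap_product /= big_nat1 addn0 binn. Qed.

Lemma gap_product_nilPi w : gap_product w [::] = 1.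
Proof. by rewrite /gap_product big1 // => r _; rewrite bin0. Qed.

Lemma gap_product_c_true w Pi : gap_product (c :: w) (true :: Pi) = gap_product (c :: w) Pi.
Proof.
rewrite /gap_product /= eqxx add1n [LHS]big_nat_recl // [RHS]big_nat_recl //= !addn0 !binn.
by congr (_ * _); apply: eq_bigr => r _; rewrite !add0n.
Qed.

Lemma gap_product_c_false w Pi : gap_product (c :: w) (false :: Pi) = gap_product w Pi.
Proof.
rewrite /gap_product /= eqxx add1n big_nat_recl //= !add0n bin0 mul1n.
by apply: eq_bigr => r _; rewrite !add0n.
Qed.

Lemma gap_product_y_false y w Pi : y != c ->
  gap_product (y :: w) (false :: Pi) = gap_product w (false :: Pi).
Proof.
move=> yc; rewrite /gap_product /= (negbTE yc) add0n.
rewrite [LHS]big_nat_recl // [RHS]big_nat_recl //= !add0n !bin0 !mul1n.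
by apply: eq_bigr => r _; rewrite !add0n.
Qed.

(* Pascal's rule in the gap after zero letters [c]. *)
Lemma gap_product_y_true y w Pi : y != c ->
  gap_product (y :: w) (true :: Pi) = gap_product (y :: w) Pi + gap_product w (true :: Pi).
Proof.
move=> yc; rewrite /gap_product /= (negbTE yc) add0n.
rewrite [LHS]big_nat_recl // [X in _ = X + _]big_nat_recl // [X in _ = _ + X]big_nat_recl //=.
under [X in _ * X = _]eq_bigr => i _ do rewrite add0n.
under [X in _ = _ * X + _]eq_bigr => i _ do rewrite add0n.
under [X in _ = _ + _ * X]eq_bigr => i _ do rewrite add0n.
rewrite -mulnDl; congr (_ * _).
set a := gapsPi Pi 0; set g := gapsw w 0.
have -> : 1 + a + (1 + g) = (a + g).+2 by lia.
by rewrite binS addnC; congr ('C(_, _) + 'C(_, _)); lia.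
Qed.

Lemma gap_product_step w Pi : count_mem c w = count_mem false Pi ->
  (w != [::]) || (Pi != [::]) -> gap_product w Pi = interleave_step gap_product w Pi.
Proof.
rewrite /interleave_step.
case: w => [|y w]; case: Pi => [|[] Pi] //=; rewrite ?gap_product_nilw //; try lia.
all: case: (eqVneq y c) => [->|yc] /= bal _; try lia.
- by rewrite !gap_product_nilPi.
- by rewrite gap_product_c_true addn0.
- exact: gap_product_y_true.
- by rewrite gap_product_c_false.
- exact: gap_product_y_false.
Qed.

Variables (b : T) (A : seq T).
Hypotheses (bc : b != c) (uA : uniq A) (bA : b \in A).

Lemma splits_into_cons w Pi x s : splits_into b c w Pi (x :: s) =
  if x == b then (if Pi is true :: Pi' then splits_into b c w Pi' s else false)
  else if w is y :: w' then (y == x) &&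
     (if x == c then (if Pi is false :: Pi' then splits_into b c w' Pi' s else false)
      else splits_into b c w' Pi s)
  else false.
Proof.
rewrite /splits_into /erase_letter /ab_word /=.
case: (eqVneq x b) => [->|xb] /=.
  by rewrite orbT /= eqxx; case: Pi => [|[] Pi]; rewrite ?eqseq_cons ?andbF.
rewrite orbF; case: (eqVneq x c) => [->|xc] /=;
  case: w => [|y w] //; rewrite eqseq_cons [y == _]eq_sym.
  by case: Pi => [|[] Pi]; rewrite ?eqseq_cons [c == b]eq_sym (negbTE bc) -?andbA ?andbF.
by rewrite -!andbA.
Qed.

Lemma count_splits_step n w Pi : all (fun x => (x != b) && (x \in A)) w ->
  count (splits_into b c w Pi) (allseqs A n.+1) =
  interleave_step (fun w' Pi' => count (splits_into b c w' Pi') (allseqs A n)) w Pi.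
Proof.
move=> Aw; rewrite count_allseqsS (bigD1_seq b) //= /interleave_step.
rewrite (eq_count (splits_into_cons w Pi b)) eqxx; congr (_ + _).
  by case: Pi => [|[] Pi] //; apply: count_pred0.
case: w Aw => [|y w] /= Aw.
  rewrite big1 // => x xb; rewrite (eq_count (splits_into_cons _ _ x)) (negbTE xb).
  exact: count_pred0.
case/andP: Aw => /andP[yb yA] _.
set C := (X in _ = X).
rewrite (eq_bigr (fun x => (x == y) * C)); last first.
  move=> x xb; rewrite (eq_count (splits_into_cons _ _ x)) (negbTE xb).
  case: (eqVneq x y) => [->|xy]; last first.
    by rewrite (eq_count (a2 := pred0)) ?count_pred0 // => s /=; rewrite eq_sym (negbTE xy).
  rewrite mul1n /C; case: (y == c) => //.
  by case: Pi {C} => [|[] Pi] //; apply: count_pred0.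
by rewrite -big_filter sum_pred1 ?filter_uniq // mem_filter yb.
Qed.

(* Both sides satisfy the same recursion, with the same base case. *)
Lemma count_splits n w Pi : all (fun x => (x != b) && (x \in A)) w ->
  count_mem c w = count_mem false Pi -> n = size w + count_mem true Pi ->
  count (splits_into b c w Pi) (allseqs A n) = gap_product w Pi.
Proof.
elim: n w Pi => [|n IH] w Pi Aw bal hn.
  move: bal hn; case: w Aw => [|y w] _; case: Pi => [|[] Pi] //=; try lia.
  by rewrite gap_product_nilw.
have nonempty : (w != [::]) || (Pi != [::]) by case: w Pi hn {Aw bal} => [|? ?] [|? ?].
rewrite count_splits_step // gap_product_step // /interleave_step; congr (_ + _).
  by case: Pi bal hn {nonempty} => [|[] Pi] //= bal; rewrite addnCA add1n => -[hn]; apply: IH.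
case: w Aw bal hn {nonempty} => [|y w] //= /andP[_ Aw] bal hn.
case: (eqVneq y c) bal => [_|yc] /= bal; move: hn; rewrite addSn => -[hn].
  by case: Pi hn bal => [|[] Pi] //= hn /addnI bal; apply: IH.
by apply: IH.
Qed.

End Interleavings.

Lemma totlenS d m : totlen d.+1 m = totlen d m + m d.+1.
Proof. by rewrite /totlen big_nat_recr. Qed.

Lemma inPM_letters d m w : inPM d m w -> all (fun x => 0 < x <= d) w.
Proof.
case/andP=> /eqP hs /allP hc.
suff: count (mem (iota 1 d)) w = size w.
  by move/eqP; rewrite -all_count => /allP H; apply/allP => x /H; rewrite /= mem_iota; lia.
rewrite -sum_count_mem ?iota_uniq // hs /totlen big_seq [RHS]big_nat_cond.
rewrite /index_iota subSS subn0; apply: eq_big => [i|i Hi]; first by rewrite mem_iota andbT add1n.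
by move: (hc i Hi) => /eqP.
Qed.

Lemma count_inPM d m w i : inPM d m w -> 0 < i <= d -> count_mem i w = m i.
Proof. by case/andP=> _ /allP hc hi; apply/eqP/hc; rewrite mem_iota; lia. Qed.

Lemma splits_into_inPM d m c w Pi W : inPM d m w -> count_mem true Pi = m d.+1 ->
  splits_into d.+1 c w Pi W -> inPM d.+1 m W.
Proof.
move=> hw hPi /andP[/eqP eW /eqP aW].
have cb : count_mem d.+1 W = m d.+1 by rewrite -hPi -aW count_ab_word_true.
apply/andP; split.
  by rewrite (size_erase_letter d.+1) eW cb totlenS; case/andP: hw => /eqP ->.
apply/allP => i; rewrite mem_iota => hi.
case: (eqVneq i d.+1) => [->|ib]; first by rewrite cb.
by rewrite -(count_erase_letter _ ib) eW (count_inPM hw) //; lia.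
Qed.

Lemma erase_letter_inPM d m W : inPM d.+1 m W -> inPM d m (erase_letter d.+1 W).
Proof.
move=> hW; have cb : count_mem d.+1 W = m d.+1 by apply: (count_inPM hW); lia.
apply/andP; split.
  by case/andP: hW; rewrite (size_erase_letter d.+1) cb totlenS eqn_add2r => ->.
apply/allP => i; rewrite mem_iota => hi.
by rewrite count_erase_letter ?(count_inPM hW) //; apply/eqP; lia.
Qed.

Lemma ab_word_inPab d m W : 0 < d -> inPM d.+1 m W -> inPab (m d) (m d.+1) (ab_word d.+1 d W).
Proof.
move=> d0 hW; rewrite /inPab count_ab_word_true count_ab_word_false; last by apply/eqP; lia.
by rewrite !(count_inPM hW) ?eqxx //; lia.
Qed.

Lemma mem_PM d m w : (w \in PM d m) = inPM d m w.
Proof.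
rewrite /PM mem_filter; case H: (inPM d m w) => //=.
rewrite mem_allseqs; case/andP: (H) => -> _ /=.
by apply/allP => x /(allP (inPM_letters H)); rewrite /= mem_iota; lia.
Qed.

Lemma uniq_PM d m : uniq (PM d m).
Proof. by rewrite filter_uniq // allseqs_uniq // iota_uniq. Qed.

Lemma mem_Pab p q Pi : (Pi \in Pab p q) = inPab p q Pi.
Proof.
rewrite /Pab mem_filter; case H: (inPab p q Pi) => //=.
rewrite mem_allseqs; case/andP: H => /eqP <- /eqP <-.
rewrite -(count_predC (pred1 false) Pi) [X in _ + X](@eq_count _ _ (pred1 true)); last by case.
by rewrite eqxx; apply/allP => -[]; rewrite !inE.
Qed.

Lemma uniq_Pab p q : uniq (Pab p q).
Proof. by rewrite filter_uniq // allseqs_uniq. Qed.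

Lemma compatibleE d w Pi W : compatible d.+2 w Pi W = splits_into d.+1 d w Pi W.
Proof. by rewrite /compatible subSS subn1. Qed.

Lemma count_splits_PM d m w Pi : 0 < d -> inPM d m w -> inPab (m d) (m d.+1) Pi ->
  count (splits_into d.+1 d w Pi) (PM d.+1 m) =
  \prod_(0 <= r < (m d).+1) 'C(piabstar Pi r + \sum_(1 <= l < d) pistar d l w r, piabstar Pi r).
Proof.
move=> d0 hw /andP[/eqP hf /eqP ht]; have /allP R := inPM_letters hw.
rewrite count_filter (eq_count (a2 := splits_into d.+1 d w Pi)); last first.
  by move=> W /=; case H: (splits_into _ _ _ _ _); rewrite ?(splits_into_inPM hw ht H).
rewrite (count_splits (A := iota 1 d.+1)) ?iota_uniq //; last 5 first.
- by apply/eqP; lia.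
- by rewrite mem_iota; lia.
- by apply/allP => x /R; rewrite mem_iota; lia.
- by rewrite hf (count_inPM hw) //; lia.
- by rewrite totlenS ht; case/andP: hw => /eqP ->.
rewrite /gap_product (count_inPM hw) //; last by lia.
apply: eq_bigr => r _; rewrite /piabstar pistar_gaps //.
rewrite -(@sum_gaps_pred1 _ d _ (index_iota 1 d)) ?iota_uniq //; last first.
  by move=> x /R; rewrite /= mem_index_iota; lia.
by congr (binomial (_ + _) _); apply: eq_big_nat => l hl; rewrite pistar_gaps //; apply/eqP; lia.
Qed.

(* The words of P(M_(d+1)) lying over a fixed w in P(M_d) are the shuffles of w with
   m_(d+1) letters d+1: this is the case c = 0, Pi = b...b of [count_splits]. *)
Lemma count_erase_letter_eq d m w : inPM d m w ->
  count (fun W => erase_letter d.+1 W == w) (PM d.+1 m) = 'C(totlen d m + m d.+1, m d.+1).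
Proof.
move=> hw; have /allP R := inPM_letters hw.
have w0 : 0 \notin w by apply/negP => /R.
set Pi := nseq (m d.+1) true.
rewrite count_filter (eq_count (a2 := splits_into d.+1 0 w Pi)); last first.
  move=> W /=; apply/andP/idP => [[eW hW]|H]; last first.
    by split; [case/andP: H | apply: (splits_into_inPM hw _ H); rewrite count_nseq mul1n].
  have /allP RW := inPM_letters hW.
  have all_b : all (pred1 true) (ab_word d.+1 0 W).
    rewrite all_map; apply/allP => y; rewrite mem_filter => /andP[/orP[/eqP y0|/eqP ->] yW] /=.
      by have := RW y yW; rewrite y0.
    by rewrite eqxx.
  rewrite /splits_into eW /= (all_pred1P _ _ all_b).
  move: all_b; rewrite all_count => /eqP <-.
  by rewrite count_ab_word_true (count_inPM hW) //; lia.
rewrite (count_splits (A := iota 1 d.+1)) ?iota_uniq //; last 4 first.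
- by rewrite mem_iota; lia.
- by apply/allP => x /R; rewrite mem_iota; lia.
- by rewrite count_nseq /= (count_memPn w0).
- by rewrite totlenS count_nseq mul1n; case/andP: hw => /eqP ->.
rewrite /gap_product (count_memPn w0) big_nat1 !gaps_notin //; last by rewrite mem_nseq andbF.
rewrite count_nseq mul1n (eq_in_count (a2 := predT)) ?count_predT; last first.
  by move=> x /R /=; case: x.
by case/andP: hw => /eqP ->; rewrite addnC.
Qed.

(* Counting P(M_(d+1)) fibrewise over P(M_d) gives the multinomial recursion. *)
Lemma size_PM d m : size (PM d m) * \prod_(1 <= i < d.+1) (m i)`! = (totlen d m)`!.
Proof.
elim: d => [|d IH]; first by rewrite /PM /totlen !big_geq //= /inPM /totlen big_geq.
have -> : size (PM d.+1 m) = \sum_(w <- PM d m) 'C(totlen d m + m d.+1, m d.+1).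
  rewrite -sum1_size (eq_big_seq (fun W => \sum_(w <- PM d m) (w == erase_letter d.+1 W))).
    rewrite exchange_big; apply: eq_big_seq => w; rewrite mem_PM => hw.
    by rewrite -(count_erase_letter_eq hw) count_sumE; apply: eq_bigr => W _; rewrite eq_sym.
  move=> W; rewrite mem_PM => /erase_letter_inPM; rewrite -mem_PM => hW.
  by rewrite -(sum_pred1 1 (uniq_PM d m) hW); apply: eq_bigr => w _; rewrite muln1.
rewrite big_const_seq iter_addn_0 big_nat_recr //= count_predT -mulnA [size _ * _]mulnA IH totlenS.
by rewrite -(bin_fact (leq_addl (totlen d m) (m d.+1))) addnK [_ * _`!]mulnC.
Qed.

Lemma multinomial_PM d m : multinomial d m = size (PM d m).
Proof. by rewrite /multinomial -size_PM mulnK // prodn_gt0 // => i; exact: fact_gt0. Qed.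

(* Every word of P(M_(d+1)) splits into exactly one pair (w, Pi). *)
Lemma sum_count_splits d m : 0 < d ->
  \sum_(w <- PM d m) \sum_(Pi <- Pab (m d) (m d.+1)) count (splits_into d.+1 d w Pi) (PM d.+1 m)
  = size (PM d.+1 m).
Proof.
move=> d0; under eq_bigr => w _ do under eq_bigr => Pi _ do rewrite count_sumE.
under eq_bigr => w _ do rewrite exchange_big.
rewrite exchange_big -sum1_size; apply: eq_big_seq => W; rewrite mem_PM => hW /=.
have hw : erase_letter d.+1 W \in PM d m by rewrite mem_PM erase_letter_inPM.
have hPi : ab_word d.+1 d W \in Pab (m d) (m d.+1) by rewrite mem_Pab ab_word_inPab.
rewrite -[RHS](sum_pred1 1 (uniq_PM d m) hw); apply: eq_bigr => w _.
rewrite (eq_bigr (fun Pi => (erase_letter d.+1 W == w) * ((Pi == ab_word d.+1 d W) * 1))).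
  by rewrite -big_distrr /= (sum_pred1 1 (uniq_Pab _ _) hPi) !muln1 eq_sym.
by move=> Pi _; rewrite muln1 /splits_into -mulnb [Pi == _]eq_sym.
Qed.

(* Part (ii).  Position tuples are embeddings of the pattern 1, ..., d: increasing
   index tuples p with w[p_i] = u_i.  [incseqs n d] lists the increasing d-tuples
   of indices below n. *)
Definition incseqs (n d : nat) : seq (seq nat) :=
  [seq p <- allseqs (iota 0 n) d | sorted ltn p].

Definition embeddings (u w : seq nat) : seq (seq nat) :=
  [seq p <- incseqs (size w) (size u) | map (nth 0 w) p == u].

Lemma postuplesE d w : postuples d w = embeddings (iota 1 d) w.
Proof.
rewrite /embeddings /incseqs size_iota -filter_predI.
by apply: eq_filter => p; rewrite /= andbC.
Qed.

Lemma sorted_ltn_rcons (s : seq nat) z :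
  sorted ltn (rcons s z) = sorted ltn s && all (fun q => q < z) s.
Proof.
elim: s => [|a s IH] //=.
by rewrite !(path_sortedE ltn_trans) all_rcons IH -!andbA; bool_congr.
Qed.

Lemma mem_incseqs n d p :
  (p \in incseqs n d) = [&& size p == d, sorted ltn p & all (fun q => q < n) p].
Proof.
rewrite mem_filter mem_allseqs andbCA; congr (_ && (_ && _)).
by apply: eq_all => q; rewrite /= mem_iota.
Qed.

Lemma incseqs_uniq n d : uniq (incseqs n d).
Proof. by rewrite filter_uniq // allseqs_uniq // iota_uniq. Qed.

(* An increasing tuple in [0, n] either avoids n or ends with n. *)
Lemma perm_incseqsS n d :
  perm_eq (incseqs n.+1 d.+1) (incseqs n d.+1 ++ map (rcons^~ n) (incseqs n d)).
Proof.
apply: uniq_perm; first exact: incseqs_uniq.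
  rewrite cat_uniq !incseqs_uniq map_inj_uniq ?incseqs_uniq //=; last exact: rcons_injl.
  by rewrite andbT; apply/hasPn => _ /mapP[q _ ->]; rewrite mem_incseqs all_rcons ltnn /= !andbF.
case/lastP => [|p z]; first by rewrite mem_cat !mem_incseqs; apply/esym/negbTE/mapP => -[[]].
rewrite mem_cat !mem_incseqs.
have -> : (rcons p z \in map (rcons^~ n) (incseqs n d)) = (z == n) && (p \in incseqs n d).
  apply/mapP/andP => [[q qin /rcons_inj [-> ->]]|[/eqP -> pin]]; first by rewrite eqxx.
  by exists p.
rewrite mem_incseqs size_rcons eqSS sorted_ltn_rcons !all_rcons.
have weaken a a' : a <= a' -> all (fun q => q < a) p -> all (fun q => q < a') p.
  by move=> aa'; apply: sub_all => q /leq_trans; apply.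
case: (size p == d) (sorted ltn p) => [] [] //=; rewrite ?andbF //.
case: (eqVneq z n) => [->|zn]; rewrite ?ltnSn ?ltnn /= ?andbF.
  by case hp: (all _ p); rewrite // (weaken n).
rewrite orbF ltnS leq_eqVlt (negbTE zn) /=.
case hp: (all (fun q => q < z) p) => //=; case zn': (z < n) => //=.
have zn1 : z <= n := ltnW zn'.
by rewrite (weaken z n zn1 hp) (weaken z n.+1 (leqW zn1) hp).
Qed.

Lemma map_nth_rcons (w : seq nat) x p : all (fun q => q < size w) p ->
  map (nth 0 (rcons w x)) p = map (nth 0 w) p.
Proof. by move/allP=> H; apply/eq_in_map => q /H qw; rewrite nth_rcons qw. Qed.

(* An embedding of [rcons u y] into [rcons w x] either avoids the last letter
   [x] of the word, or maps [y] onto it. *)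
Lemma sum_embeddings_rcons (f : seq nat -> nat) u y w x :
  \sum_(p <- embeddings (rcons u y) (rcons w x)) f p =
  \sum_(p <- embeddings (rcons u y) w) f p +
  (x == y) * \sum_(p <- embeddings u w) f (rcons p (size w)).
Proof.
rewrite /embeddings !size_rcons (perm_big _ (perm_filter _ (perm_incseqsS _ _))) /=.
rewrite filter_cat big_cat filter_map big_map; congr (_ + _).
  congr (\sum_(p <- _) _); apply: eq_in_filter => p.
  by rewrite mem_incseqs => /and3P[_ _ H]; rewrite map_nth_rcons.
rewrite (eq_in_filter (a2 := fun p => (map (nth 0 w) p == u) && (x == y))); last first.
  move=> p; rewrite mem_incseqs => /and3P[_ _ H] /=.
  by rewrite map_rcons eqseq_rcons map_nth_rcons // nth_rcons ltnn eqxx.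
case: (x == y); last first.
  by rewrite mul0n (@eq_filter _ _ pred0) ?filter_pred0 ?big_nil // => p /=; rewrite andbF.
by rewrite mul1n; congr (\sum_(p <- _) _); apply: eq_filter => p; rewrite andbT.
Qed.

Lemma size_embeddings_rcons u y w x :
  size (embeddings (rcons u y) (rcons w x)) =
  size (embeddings (rcons u y) w) + (x == y) * size (embeddings u w).
Proof. by rewrite -!sum1_size sum_embeddings_rcons. Qed.

Lemma embeddings_lt_size u w p : p \in embeddings u w -> all (fun q => q < size w) p.
Proof. by rewrite mem_filter mem_incseqs => /and4P[]. Qed.

Lemma size_embeddings_erase b u W : b \notin u ->
  size (embeddings u W) = size (embeddings u (erase_letter b W)).
Proof.
elim/last_ind: W u => [|W x IH] u bu //.
case/lastP: u bu => [|u y] bu; first by [].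
have bu' : b \notin u by apply: contra bu; rewrite mem_rcons inE => ->; rewrite orbT.
have by' : b != y by apply: contra bu => /eqP ->; rewrite mem_rcons mem_head.
rewrite size_embeddings_rcons /erase_letter filter_rcons -/(erase_letter b W).
case: (eqVneq x b) => [->|xb] /=; first by rewrite (negbTE by') mul0n addn0 IH.
by rewrite size_embeddings_rcons -IH // -IH.
Qed.

Lemma postuples_rcons c W x : size (postuples c.+1 (rcons W x)) =
  size (postuples c.+1 W) + (x == c.+1) * size (postuples c W).
Proof. by rewrite !postuplesE iota_rcons size_embeddings_rcons add1n. Qed.

Lemma St_full c w : St c w (count_mem c w) = size (postuples c w).
Proof.
rewrite /St (eq_count (a2 := predT)) ?count_predT // => p /=.
by rewrite -{2}(cat_take_drop (last 0 p).+1 w) count_cat leq_addr.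
Qed.

(* Appending a letter [x] to w creates the tuples ending at [x], which count in
   S_r exactly when x = c and fewer than r letters c precede it. *)
Lemma St_rcons c w x r : 0 < c ->
  St c (rcons w x) r = St c w r + (x == c) * ((count_mem c w < r) * size (postuples c.-1 w)).
Proof.
case: c => [//|c] _ /=; rewrite /St !postuplesE iota_rcons add1n.
rewrite !(count_sumE _ (embeddings _ _)) sum_embeddings_rcons; congr (_ + _).
  apply: eq_big_seq => p /[dup] /embeddings_lt_size /allP lt_p.
  rewrite mem_filter mem_incseqs size_rcons => /and4P[_ /eqP sp _ _].
  have lp : last 0 p < size w.
    by case/lastP: p sp lt_p => [//|p q] _ lt_p; rewrite last_rcons lt_p // mem_rcons mem_head.
  by rewrite -cats1 takel_cat.
case: (eqVneq x c.+1) => [->|]; rewrite ?mul0n // !mul1n.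
under eq_bigr => p _ do
  rewrite last_rcons take_oversize ?size_rcons // -cats1 count_cat /= eqxx addn1.
by rewrite big_const_seq iter_addn_0 count_predT mulnC.
Qed.

Lemma size_postuples_gaps c N W : 0 < c -> count_mem c W < N ->
  size (postuples c.+1 W) =
  \sum_(0 <= r < N) St c (erase_letter c.+1 W) r * gaps false (pred1 true) (ab_word c.+1 c W) r.
Proof.
move=> c0; elim/last_ind: W => [|W x IH] hW.
  by rewrite /postuples /= big1 // => r _; rewrite muln0.
have hW' : count_mem c W < N by move: hW; rewrite -cats1 count_cat; lia.
move/(_ hW'): IH => IH.
have cb : c != c.+1 by rewrite neq_ltn ltnSn.
rewrite postuples_rcons /erase_letter /ab_word !filter_rcons -/(erase_letter c.+1 W).
case: (eqVneq x c.+1) => [->|xb] /=.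
  rewrite orbT map_rcons eqxx mul1n -/(ab_word c.+1 c W).
  under eq_bigr => r _ do rewrite gaps_rcons /= mulnDr.
  rewrite big_split /= -IH count_ab_word_false // sum_nat_pick //.
  rewrite -(count_erase_letter W cb) St_full !postuplesE.
  rewrite [size (embeddings (iota 1 c) _)](size_embeddings_erase (b := c.+1)) //.
  by rewrite mem_iota ltnn andbF.
rewrite mul0n addn0 orbF; case: (eqVneq x c) => [->|xc] /=.
  rewrite map_rcons (negbTE cb) -/(ab_word c.+1 c W).
  under eq_bigr => r _ do rewrite gaps_rcons /= addn0 St_rcons // eqxx mul1n mulnDl.
  rewrite big_split /= [X in _ = _ + X]big1 ?addn0 // => r _.
  case: (ltnP (count_mem c (erase_letter c.+1 W)) r) => H; last by rewrite mul0n.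
  by rewrite gaps_large ?muln0 // count_ab_word_false // -(count_erase_letter W cb).
rewrite -/(ab_word c.+1 c W) IH; apply: eq_bigr => r _.
by rewrite St_rcons // (negbTE xc) mul0n addn0.
Qed.

Lemma size_postuples_splits d m w Pi W : 0 < d -> inPab (m d) (m d.+1) Pi ->
  splits_into d.+1 d w Pi W ->
  size (postuples d.+1 W) = \sum_(0 <= r < (m d).+1) St d w r * piabstar Pi r.
Proof.
move=> d0 /andP[/eqP hf _] /andP[/eqP eW /eqP aW].
have dd1 : d != d.+1 by rewrite neq_ltn ltnSn.
rewrite (size_postuples_gaps (N := (m d).+1) d0); last first.
  by rewrite -(count_ab_word_false W dd1) aW hf.
by rewrite eW aW; apply: eq_bigr => r _; rewrite /piabstar pistar_gaps.
Qed.

Unset Implicit Arguments.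

Theorem mainTheorem6 (k : nat) (m : nat -> nat) (hk : 3 <= k) :
  (forall (w : seq nat) (Pi : seq bool),
     inPM (k - 2) m w -> inPab (m (k - 2)) (m k.-1) Pi ->
     count (compatible k w Pi) (PM k.-1 m) = prodformula k m w Pi) /\
  (forall (w : seq nat) (Pi : seq bool) (W : seq nat),
     inPM (k - 2) m w -> inPab (m (k - 2)) (m k.-1) Pi ->
     inPM k.-1 m W -> compatible k w Pi W ->
     size (postuples k.-1 W) =
       \sum_(0 <= r < (m (k - 2)).+1) St (k - 2) w r * piabstar Pi r) /\
  \sum_(w <- PM (k - 2) m) \sum_(Pi <- Pab (m (k - 2)) (m k.-1)) prodformula k m w Pi
    = multinomial k.-1 m.
Proof.
case: k hk => [|[|[|d]]] // _; set k := d.+3.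
have d0 : 0 < d.+1 by [].
have count_compatible w Pi : inPM d.+1 m w -> inPab (m d.+1) (m d.+2) Pi ->
    count (compatible k w Pi) (PM d.+2 m) = prodformula k m w Pi.
  by move=> hw hPi; rewrite (eq_count (compatibleE _ _ _)) count_splits_PM.
rewrite /= subSS subn1 /=; split; first exact: count_compatible.
split; first by move=> w Pi W _ hPi _; rewrite compatibleE; apply: size_postuples_splits.
rewrite multinomial_PM -(sum_count_splits m d0).
apply: eq_big_seq => w; rewrite mem_PM => hw; apply: eq_big_seq => Pi; rewrite mem_Pab => hPi.
by rewrite count_compatible.
Qed.
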